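(* Let $\mathcal G$ be a DAG with vertex set $\mathbf V$, $\mathbf Y\subseteq\mathbf V$, and $\eta_{\mathfrak a_{\boldsymbol\alpha}}$ an edge intervention that is node consistent for $\mathbf Y$. Then (in any causal structure for $\mathcal G$) $p(\mathbf Y(\mathfrak a_{\boldsymbol\alpha}))=p(\mathbf Y(\mathbf a_{\boldsymbol\alpha}))$, where $\mathbf a_{\boldsymbol\alpha}$ is the induced node intervention.
   Context: Let $\mathcal G$ be a DAG with finite vertex set $\mathbf V$; vertices are random variables with state spaces $\mathfrak X_V$; $\mathfrak X_{\mathbf A}=\prod_{A\in\mathbf A}\mathfrak X_A$; $\mathrm{pa}(V)$ are parents. A causal structure is a collection of one-step potential outcomes $V(\mathbf b)$, $\mathbf b\in\mathfrak X_{\mathrm{pa}(V)}$, with a joint distribution. Node interventions: $V(\mathbf a)=V(\mathbf a_{\mathrm{pa}(V)\cap\mathbf A},\{W(\mathbf a):W\in\mathrm{pa}(V)\setminus\mathbf A\})$ recursively. Edge interventions: for an edge set $\boldsymbol\alpha$, $\mathfrak a\in\mathfrak X_{\boldsymbol\alpha}=\prod_{(AB)\in\boldsymbol\alpha}\mathfrak X_A$ assigns each edge a value of its source; $V(\mathfrak a)=V(\mathfrak a_{\{(WV)\in\boldsymbol\alpha\}},\{W(\mathfrak a):W\in\mathrm{pa}(V),(WV)\notin\boldsymbol\alpha\})$ recursively. A directed path $\beta$ (sequence of distinct vertices joined by directed edges) with sink in $\mathbf Y$ is relevant for $\mathbf Y$ given $\boldsymbol\alpha$ if no edge of $\boldsymbol\alpha$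 lies on $\beta$ except possibly its first edge; $\mathrm{rel}_{\mathcal G}(\mathbf Y\mid\boldsymbol\alpha)$ is their set. $\boldsymbol\alpha$ is live for $\mathbf Y$ if each of its edges is the first edge of some relevant path. $\boldsymbol\alpha$ live for $\mathbf Y$ is consistent for $\mathbf Y$ if for every vertex $A$, the set of first edges of relevant paths with source $A$ is disjoint from or contained in $\boldsymbol\alpha$. $\eta_{\mathfrak a}$ is node consistent for $\mathbf Y$ if $\boldsymbol\alpha$ is live and consistent for $\mathbf Y$ and for every vertex $A$ all edges of $\boldsymbol\alpha$ with source $A$ get the same value; the induced node intervention $\mathbf a_{\boldsymbol\alpha}$ sets each source vertex $A$ of an edge in $\boldsymbol\alpha$ to that common value. *)

From mathcomp Require Import all_boot all_order all_algebra.
From mathcomp Require Import classical_sets reals ereal measure probability.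

Set Implicit Arguments.
Unset Strict Implicit.
Unset Printing Implicit Defensive.
Local Open Scope classical_set_scope.

Section CausalDAG.

(* Vertices: a finite type V; the DAG is given by its edge relation G
   (G w v means there is a directed edge w -> v, i.e. w is a parent of v). *)
Variables (V : finType) (G : rel V).

Definition acyclic : Prop := forall w v : V, G w v -> ~~ connect G v w.

Definition edges : {set V * V} := [set e | G e.1 e.2].

Definition dpath (s : seq V) : bool :=
  match s with
  | [::] => false
  | x :: s' => path G x s' && uniq s
  end.

Definition path_edges (s : seq V) : seq (V * V) := zip s (behead s).

Definition first_edge (s : seq V) : option (V * V) :=
  match s with
  | x :: y :: _ => Some (x, y)
  | _ => None
  end.

Definition relevant (Y : {set V}) (alpha : {set V * V}) (s : seq V) : bool :=
  match s with
  | [::] => false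
  | x :: s' => [&& dpath s, last x s' \in Y &
                   all (fun e => e \notin alpha) (behead (path_edges s))]
  end.

Definition live (Y : {set V}) (alpha : {set V * V}) : Prop :=
  forall e, e \in alpha ->
    exists s, relevant Y alpha s /\ first_edge s = Some e.

Definition rel_first_edges (Y : {set V}) (alpha : {set V * V}) (A : V)
  : set (V * V) :=
  [set e | e.1 = A /\ exists s, relevant Y alpha s /\ first_edge s = Some e].

Definition consistent (Y : {set V}) (alpha : {set V * V}) : Prop :=
  live Y alpha /\
  forall A : V,
    (rel_first_edges Y alpha A `&` [set e | e \in alpha] = set0) \/
    (rel_first_edges Y alpha A `<=` [set e | e \in alpha]).

Variable X : V -> Type.

(* An edge intervention value: frak_a assigns to each edge (A,B) of alpha a
   value of its source A (it is a total function, only its values on alpha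
   matter). *)
Definition edge_value := forall e : V * V, X e.1.

Definition node_consistent (Y : {set V}) (alpha : {set V * V})
  (fa : edge_value) : Prop :=
  consistent Y alpha /\
  forall A B B' : V, (A, B) \in alpha -> (A, B') \in alpha ->
    fa (A, B) = fa (A, B').

(* Induced node intervention: the set of sources of edges in alpha, ... *)
Definition induced_nodes (alpha : {set V * V}) : {set V} :=
  [set A | [exists B, (A, B) \in alpha]].

(* ... each set to the common value of its edges (default x0 elsewhere,
   irrelevant since only values on induced_nodes are used). *)
Definition induced_value (x0 : forall v, X v) (alpha : {set V * V})
  (fa : edge_value) : forall v, X v :=
  fun A => match [pick B | (A, B) \in alpha] with
           | Some B => fa (A, B)
           | None => x0 A
           end.

(* A causal structure over a sample space Omega: for each vertex v, the
   one-step potential outcomes v(b), b ranging over values of pa(v). *)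
Variable Omega : Type.
Definition causal_structure :=
  forall v : V, Omega -> (forall w : {w : V | G w v}, X (proj1_sig w)) -> X v.

Variable pot : causal_structure.

(* An "override" ov w v = Some x means: in the recursion, the parent w of v
   is set to x; None means w's own (recursively defined) counterfactual is
   used. *)
Definition step (ov : forall w v : V, option (X w)) (om : Omega)
  (f : forall v, X v) : forall v, X v :=
  fun v => @pot v om (fun w => match ov (proj1_sig w) v with
                              | Some x => x
                              | None => f (proj1_sig w)
                              end).

(* The recursively defined counterfactuals: on a DAG the recursion
   terminates after at most #|V| unfoldings, so #|V| iterations of the
   structural map from any starting point x0 give the recursive solution. *)
Definition counterfactual (x0 : forall v, X v)
  (ov : forall w v : V, option (X w)) (om : Omega) : forall v, X v :=
  iter #|V| (step ov om) x0.

(* Node intervention A := a : V(a) = V(a_{pa(V) cap A}, {W(a) : W in pa(V)\A}) *)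
Definition node_ov (A : {set V}) (a : forall v, X v) : forall w v : V, option (X w) :=
  fun w v => if w \in A then Some (a w) else None.

(* Edge intervention alpha := frak_a :
   V(frak_a) = V(frak_a_{(WV) in alpha}, {W(frak_a) : (WV) notin alpha}) *)
Definition edge_ov (alpha : {set V * V}) (fa : edge_value)
  : forall w v : V, option (X w) :=
  fun w v => if (w, v) \in alpha then Some (fa (w, v)) else None.

Definition restrict (Y : {set V}) (f : forall v, X v)
  : forall y : {y : V | y \in Y}, X (proj1_sig y) :=
  fun y => f (proj1_sig y).

End CausalDAG.
Arguments restrict [V X] Y f y.

From mathcomp Require Import all_boot all_order all_algebra.
From mathcomp Require Import classical_sets reals ereal measure probability.
From mathcomp Require Import boolp.

Set Implicit Arguments.
Unset Strict Implicit.
Unset Printing Implicit Defensive.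
Local Open Scope classical_set_scope.

(* Call a vertex unblocked if some directed path from it reaches Y without
   using any edge of alpha; every vertex of Y is unblocked. Both interventions
   feed every unblocked vertex the same parent values: an alpha-edge into it is
   the first edge of a relevant path, so by consistency its source is an
   induced node and receives the common value of its alpha-edges; any other
   parent is an unblocked vertex that, by consistency again, is not an induced
   node. Hence the two counterfactuals agree on all unblocked vertices. *)

Section Counterfactuals.

Variables (V : finType) (G : rel V) (X : V -> Type) (Omega : Type).
Variable pot : causal_structure G X Omega.

Lemma counterfactual_eq_on (S : V -> Prop) (ov1 ov2 : forall w v : V, option (X w))
    (x0 : forall v, X v) (om : Omega) :
  (forall w v, G w v -> S v -> ov1 w v = ov2 w v) ->
  (forall w v, G w v -> S v -> ov1 w v = None -> S w) ->
  forall v, S v -> counterfactual pot x0 ov1 om v = counterfactual pot x0 ov2 om v.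
Proof.
move=> ov_eq ov_closed; rewrite /counterfactual; elim: #|V| => [//|n IHn] v Sv /=.
rewrite /step; congr (pot _ _); apply: functional_extensionality_dep => -[w Gwv] /=.
rewrite -(ov_eq _ _ Gwv Sv).
by case ovwv: (ov1 w v) => [//|]; apply/IHn/(ov_closed _ _ Gwv Sv).
Qed.

End Counterfactuals.

Section Unblocked.

Variables (V : finType) (G : rel V) (Y : {set V}) (alpha : {set V * V}).
Hypothesis G_acyclic : acyclic G.

Definition free_path_to_Y (v : V) (s : seq V) : bool :=
  [&& dpath G (v :: s), last v s \in Y &
      all (fun e => e \notin alpha) (path_edges (v :: s))].

Definition unblocked (v : V) : Prop := exists s, free_path_to_Y v s.

Lemma unblocked_in (y : V) : y \in Y -> unblocked y.
Proof. by exists [::]; rewrite /free_path_to_Y /= andbT. Qed.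

Lemma dpath_cons (w v : V) (s : seq V) :
  G w v -> dpath G (v :: s) -> dpath G [:: w, v & s].
Proof.
move=> Gwv /andP [pvs uvs]; rewrite /= Gwv pvs /=.
rewrite -/(uniq (v :: s)) uvs andbT.
by apply/negP => /(path_connect pvs); apply/negP/G_acyclic.
Qed.

Lemma relevant_cons_free_path (w v : V) (s : seq V) :
  G w v -> free_path_to_Y v s -> relevant G Y alpha [:: w, v & s].
Proof. by move=> Gwv /and3P [dvs Ys free]; apply/and3P; split; rewrite ?dpath_cons. Qed.

Lemma unblocked_parent (w v : V) :
  G w v -> (w, v) \notin alpha -> unblocked v -> unblocked w.
Proof.
move=> Gwv wv_alpha [s /and3P [dvs Ys free]].
by exists (v :: s); apply/and3P; split; rewrite ?dpath_cons //= wv_alpha.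
Qed.

Lemma unblocked_parent_rel_first_edge (w v : V) :
  G w v -> unblocked v -> rel_first_edges G Y alpha w (w, v).
Proof.
by move=> Gwv [s vs]; split=> //; exists [:: w, v & s]; rewrite relevant_cons_free_path.
Qed.

End Unblocked.

Section InducedIntervention.

Variables (V : finType) (G : rel V) (X : V -> Type) (x0 : forall v, X v).
Variables (Y : {set V}) (alpha : {set V * V}) (fa : edge_value X).

Lemma mem_induced_nodes (A B : V) : (A, B) \in alpha -> A \in induced_nodes alpha.
Proof. by move=> AB; rewrite inE; apply/existsP; exists B. Qed.

Lemma induced_valueE (A B : V) :
  (forall B1 B2, (A, B1) \in alpha -> (A, B2) \in alpha -> fa (A, B1) = fa (A, B2)) ->
  (A, B) \in alpha -> induced_value x0 alpha fa A = fa (A, B).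
Proof.
move=> fa_src AB; rewrite /induced_value.
by case: pickP => [B' AB'|/(_ B)]; [exact: fa_src | rewrite AB].
Qed.

Lemma consistent_notin_induced_nodes (w v : V) :
  consistent G Y alpha -> rel_first_edges G Y alpha w (w, v) ->
  (w, v) \notin alpha -> w \notin induced_nodes alpha.
Proof.
move=> [alpha_live alpha_cons] wv_rel wv_alpha.
apply/negP; rewrite inE => /existsP [B wB].
case: (alpha_cons w) => [disj | /(_ _ wv_rel) /=]; last by rewrite (negbTE wv_alpha).
have [s [s_rel s_first]] := alpha_live _ wB.
have : (rel_first_edges G Y alpha w `&` [set e | e \in alpha]) (w, B).
  by split=> //; split=> //; exists s.
by rewrite disj.
Qed.

Lemma edge_ov_node_ov_unblocked (w v : V) :
  acyclic G -> node_consistent G Y alpha fa -> G w v -> unblocked G Y alpha v ->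
  edge_ov alpha fa w v = node_ov (induced_nodes alpha) (induced_value x0 alpha fa) w v.
Proof.
move=> G_acyclic [alpha_cons fa_src] Gwv v_unblocked.
rewrite /edge_ov /node_ov; case: ifP => [wv_alpha | /negbT wv_alpha].
  by rewrite (mem_induced_nodes wv_alpha) (induced_valueE (@fa_src w) wv_alpha).
have wv_rel := unblocked_parent_rel_first_edge G_acyclic Gwv v_unblocked.
by rewrite (negbTE (consistent_notin_induced_nodes alpha_cons wv_rel wv_alpha)).
Qed.

End InducedIntervention.

Theorem lemma11 (V : finType) (G : rel V) (X : V -> Type)
  (x0 : forall v, X v)
  (d : measure_display) (Omega : measurableType d) (R : realType)
  (P : probability Omega R) (pot : causal_structure G X Omega)
  (Y : {set V}) (alpha : {set V * V}) (fa : edge_value X) :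
  acyclic G ->
  alpha \subset edges G ->
  node_consistent G Y alpha fa ->
  forall E : set (forall y : {y : V | y \in Y}, X (proj1_sig y)),
    P [set om : Omega | E (restrict Y (counterfactual pot x0 (edge_ov alpha fa) om))]
    = P [set om : Omega | E (restrict Y (counterfactual pot x0
           (node_ov (induced_nodes alpha) (induced_value x0 alpha fa)) om))].
Proof.
move=> G_acyclic _ fa_node_consistent E.
have ov_eq := edge_ov_node_ov_unblocked x0 G_acyclic fa_node_consistent.
have ov_closed w v : G w v -> unblocked G Y alpha v ->
    edge_ov alpha fa w v = None -> unblocked G Y alpha w.
  rewrite /edge_ov; case: ifP => // /negbT wv_alpha Gwv v_unblocked _.
  exact: (unblocked_parent G_acyclic Gwv wv_alpha v_unblocked).
congr (P _); apply: funext => om /=; congr E.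
apply: functional_extensionality_dep => -[y y_Y] /=.
exact: (counterfactual_eq_on pot x0 om ov_eq ov_closed (unblocked_in G alpha y_Y)).
Qed.
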